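(* Assume that each bus has either no generator or at least two generators, and that $x^*_n>0$ for all $n$; let $b^*$ be the unique efficient Nash equilibrium, $b^*_n=2a_nx^*_n+c_n$. Consider any execution of the Bid Adjustment Algorithm with $0<\beta_k<2a_n$ for all $n$ and $k\ge1$, and let $a_{\max}=\max_n a_n$. Then for all $k\ge1$, $$\langle b(k+1)-b(k),\,b^*-b(k)\rangle\ \ge\ \frac{\beta_k}{2a_{\max}}\,\|b(k)-b^*\|^2.$$
   Context: Network: directed graph with buses $\{1,\dots,N_b\}$, edge set $\mathcal E$, line flow limits $\bar z_{ij}>0$, $G_i$ the set of generators at bus $i$ (the $G_i$ partition $\{1,\dots,N\}$), loads $y_i\ge0$. Generator $n$ has cost $f_n(x)=a_nx^2+c_nx$, $a_n>0$, $c_n\ge0$. DC-OPF: minimize $\sum_n f_n(x_n)$ over $(x,z)$ s.t. $\sum_{j:(i,j)\in\mathcal E}z_{ij}-\sum_{j:(j,i)\in\mathcal E}z_{ji}=\sum_{n\in G_i}x_n-y_i$ for all $i$, $|z_{ij}|\le\bar z_{ij}$, $x\ge0$; assumed feasible with optimizer $(x^*,z^* )$, $x^*$ unique. S-DC-OPF given bids $b\ge0$: same constraints, objective $\sum_n b_nx_n$. An efficient Nash equilibrium $b^*$ is in particular a bid for which $(x^*,z^* )$ is an optimizer of S-DC-OPF with bids $b^*$ (under the stated assumptions it is unique and equals $2a_nx^*_n+c_n$). $\|\cdot\|$ is the Euclidean norm. Bid Adjustment Algorithm: given stepsizes $\beta_k>0$, each generator picks $b_n(1)\ge c_n$. For each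 $k\ge1$: $q_n(k)=\arg\max_{q\ge0}(b_n(k)q-f_n(q))$; the operator selects an optimizer $(x^{\rm opt}(k),z^{\rm opt}(k))$ of S-DC-OPF with bids $b(k)$; and $b_n(k+1)=[\,b_n(k)+\beta_k(x^{\rm opt}_n(k)-q_n(k))\,]^+$, where $[u]^+=\max\{0,u\}$. *)

From HB Require Import structures.
From mathcomp Require Import all_boot all_order all_algebra.
Set Implicit Arguments. Unset Strict Implicit. Unset Printing Implicit Defensive.
Import Order.TTheory GRing.Theory Num.Theory.
Local Open Scope ring_scope.

Section DCOPF.
Variables (R : realFieldType) (Nb N : nat).
(* network: directed edge set E on buses 'I_Nb, line limits zbar,
   generator n sits at bus loc n (so G_i = [set n | loc n == i]), loads y *)
Variables (E : {set 'I_Nb * 'I_Nb}) (zbar : 'I_Nb * 'I_Nb -> R)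
          (loc : 'I_N -> 'I_Nb) (y : 'I_Nb -> R).

Definition feasible (x : 'I_N -> R) (z : 'I_Nb * 'I_Nb -> R) : Prop :=
  (forall i : 'I_Nb,
      \sum_(e in E | e.1 == i) z e - \sum_(e in E | e.2 == i) z e
      = \sum_(n | loc n == i) x n - y i)
  /\ (forall e, e \in E -> `|z e| <= zbar e)
  /\ (forall n, 0 <= x n).

Definition gcost (a c : 'I_N -> R) (n : 'I_N) (t : R) : R := a n * t ^+ 2 + c n * t.

Definition dcopf_opt (a c : 'I_N -> R) x z : Prop :=
  feasible x z /\
  forall x' z', feasible x' z' ->
    \sum_n gcost a c n (x n) <= \sum_n gcost a c n (x' n).

Definition sdcopf_opt (b : 'I_N -> R) x z : Prop :=
  feasible x z /\
  forall x' z', feasible x' z' ->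
    \sum_n b n * x n <= \sum_n b n * x' n.
End DCOPF.

Definition is_argmax_profit (R : realFieldType) (f : R -> R) (b q : R) : Prop :=
  0 <= q /\ forall q', 0 <= q' -> b * q' - f q' <= b * q - f q.

Definition pos_part (R : realFieldType) (u : R) : R := Num.max 0 u.

From HB Require Import structures.
From mathcomp Require Import all_boot all_order all_algebra.
From mathcomp Require Import ring lra.
Import Order.TTheory GRing.Theory Num.Theory.
Local Open Scope ring_scope.

(* While b_n >= c_n, the profit maximizer is q_n = (b_n - c_n)/(2 a_n), so
   b_n(k+1) - b_n(k) = beta_k (x^opt_n - x*_n + (b*_n - b_n)/(2 a_n)); the
   condition beta_k < 2 a_n keeps b_n(k+1) >= c_n, so the clipping [.]^+ never
   acts.  Since x^opt minimizes the bid cost b(k).x and x* satisfies the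
   first-order optimality condition of DC-OPF, whose gradient is b*,
   sum_n (x^opt_n - x*_n)(b*_n - b_n) >= 0.  What remains is
   beta_k sum_n (b*_n - b_n)^2/(2 a_n) >= beta_k/(2 a_max) ||b - b*||^2. *)

Lemma argmax_profit_quadratic {R : realFieldType} {a c b q : R} :
  0 < a -> c <= b ->
  is_argmax_profit (fun t => a * t ^+ 2 + c * t) b q -> q = (b - c) / (2 * a).
Proof.
move=> a_gt0 c_le_b [q_ge0 q_max].
set q0 := (b - c) / (2 * a).
have b_eq : b = 2 * a * q0 + c by rewrite /q0 mulrC divfK ?subrK ?mulf_neq0 ?gt_eqF.
have q0_ge0 : 0 <= q0 by apply: divr_ge0; lra.
have := q_max _ q0_ge0; rewrite b_eq => profit_le.
have sq_le0 : (q - q0) ^+ 2 <= 0 by rewrite -(pmulr_rle0 _ a_gt0); nra.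
have : (q - q0) ^+ 2 == 0 by rewrite eq_le sq_le0 sqr_ge0.
by rewrite sqrf_eq0 subr_eq0 => /eqP.
Qed.

Lemma bid_update_ge_cost {R : realFieldType} {a c b beta x : R} :
  0 < beta < 2 * a -> c <= b -> 0 <= x ->
  c <= b + beta * (x - (b - c) / (2 * a)).
Proof.
move=> /andP[beta_gt0 beta_lt] c_le_b x_ge0.
have step_le : beta * ((b - c) / (2 * a)) <= b - c.
  by rewrite mulrA ler_pdivrMr; [nra | lra].
have : 0 <= beta * x by apply: mulr_ge0; lra.
lra.
Qed.

Lemma ge0_of_convex_expansion {R : realFieldType} {S A : R} :
  0 <= A -> (forall t, 0 < t <= 1 -> 0 <= t * S + t ^+ 2 * A) -> 0 <= S.
Proof.
move=> A_ge0 expansion_ge0; rewrite leNgt; apply/negP => S_lt0.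
(* this t makes the expansion equal to t^2 S < 0 *)
set t := - S / (A - S).
have AS_gt0 : 0 < A - S by lra.
have t_gt0 : 0 < t by rewrite divr_gt0 ?oppr_gt0.
have t_le1 : t <= 1 by rewrite ler_pdivrMr // mul1r; lra.
have tAS : t * (A - S) = - S by rewrite /t mulfVK ?gt_eqF.
have := expansion_ge0 t; rewrite t_gt0 t_le1 => /(_ isT).
have -> : t * S + t ^+ 2 * A = t ^+ 2 * S by nra.
by rewrite pmulr_rge0 ?exprn_gt0 // leNgt S_lt0.
Qed.

Section DCOPF.
Context {R : realFieldType} {Nb N : nat}.
Context {E : {set 'I_Nb * 'I_Nb}} {zbar : 'I_Nb * 'I_Nb -> R}
        {loc : 'I_N -> 'I_Nb} {y : 'I_Nb -> R}.

Local Notation feasible := (feasible E zbar loc y).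

Lemma feasible_convex {x x' : 'I_N -> R} {z z' : 'I_Nb * 'I_Nb -> R} {t : R} :
  0 <= t <= 1 -> feasible x z -> feasible x' z' ->
  feasible (fun n => (1 - t) * x n + t * x' n) (fun e => (1 - t) * z e + t * z' e).
Proof.
move=> /andP[t_ge0 t_le1] [bal [lim pos]] [bal' [lim' pos']]; split; [|split].
- move=> i; rewrite !big_split /= -!mulr_sumr.
  move: (bal i) (bal' i) => /eqP; rewrite subr_eq => /eqP ->.
  by move=> /eqP; rewrite subr_eq => /eqP ->; ring.
- move=> e eE; have := lim e eE; have := lim' e eE; rewrite !ler_norml.
  by move=> /andP[? ?] /andP[? ?]; apply/andP; split; nra.
- by move=> n; have := pos n; have := pos' n; nra.
Qed.

Lemma dcopf_opt_first_order {a c xs x : 'I_N -> R} {zs z} :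
  (forall n, 0 < a n) -> dcopf_opt E zbar loc y a c xs zs -> feasible x z ->
  0 <= \sum_n (2 * a n * xs n + c n) * (x n - xs n).
Proof.
move=> a_gt0 [xs_feas xs_min] x_feas.
have quad_ge0 : 0 <= \sum_n a n * (x n - xs n) ^+ 2.
  by apply: sumr_ge0 => n _; rewrite mulr_ge0 ?sqr_ge0 ?ltW.
apply: (ge0_of_convex_expansion quad_ge0).
move=> t /andP[t_gt0 t_le1].
have t_unit : 0 <= t <= 1 by rewrite t_le1 ltW.
have := xs_min _ _ (feasible_convex t_unit xs_feas x_feas).
rewrite -subr_ge0 -sumrB !mulr_sumr -big_split /=.
congr (0 <= _); apply: eq_bigr => n _; rewrite /gcost; ring.
Qed.

Lemma sdcopf_opt_bid_gap {a c b xs x : 'I_N -> R} {zs z} :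
  (forall n, 0 < a n) -> dcopf_opt E zbar loc y a c xs zs ->
  sdcopf_opt E zbar loc y b x z ->
  0 <= \sum_n (x n - xs n) * (2 * a n * xs n + c n - b n).
Proof.
move=> a_gt0 xs_opt [x_feas x_min].
have xs_gap := dcopf_opt_first_order a_gt0 xs_opt x_feas.
have x_gap := x_min _ _ (proj1 xs_opt); rewrite -subr_ge0 -sumrB in x_gap.
have := addr_ge0 xs_gap x_gap; rewrite -big_split /=.
by congr (0 <= _); apply: eq_bigr => n _; ring.
Qed.

End DCOPF.

Section BidAdjustment.
Context {R : realFieldType} {N : nat} {a c : 'I_N -> R}.
Context {b : nat -> 'I_N -> R} {beta : nat -> R} {q xopt : nat -> 'I_N -> R}.
Hypothesis a_gt0 : forall n, 0 < a n.
Hypothesis c_ge0 : forall n, 0 <= c n.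
Hypothesis beta_bounds : forall k, (1 <= k)%N -> forall n, 0 < beta k < 2 * a n.
Hypothesis b1_ge_cost : forall n, c n <= b 1%N n.
Hypothesis q_argmax : forall k, (1 <= k)%N -> forall n,
  is_argmax_profit (gcost a c n) (b k n) (q k n).
Hypothesis xopt_ge0 : forall k, (1 <= k)%N -> forall n, 0 <= xopt k n.
Hypothesis b_update : forall k, (1 <= k)%N -> forall n,
  b k.+1 n = pos_part (b k n + beta k * (xopt k n - q k n)).

Let unclipped_ge_cost {k n} : (1 <= k)%N -> c n <= b k n ->
  c n <= b k n + beta k * (xopt k n - q k n).
Proof.
move=> k_ge1 c_le_b.
rewrite (argmax_profit_quadratic (a_gt0 n) c_le_b (q_argmax _ k_ge1 n)).
exact: bid_update_ge_cost (beta_bounds _ k_ge1 n) c_le_b (xopt_ge0 _ k_ge1 n).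
Qed.

Lemma bid_adjustment_ge_cost k : (1 <= k)%N -> forall n, c n <= b k n.
Proof.
elim: k => [//|[|k] IH] _ n; first exact: b1_ge_cost.
rewrite b_update // /pos_part le_max.
by rewrite unclipped_ge_cost ?orbT ?IH.
Qed.

Lemma bid_adjustment_step k : (1 <= k)%N -> forall n,
  b k.+1 n = b k n + beta k * (xopt k n - (b k n - c n) / (2 * a n)).
Proof.
move=> k_ge1 n; have c_le_b := bid_adjustment_ge_cost _ k_ge1 n.
rewrite -(argmax_profit_quadratic (a_gt0 n) c_le_b (q_argmax _ k_ge1 n)).
rewrite b_update // /pos_part; apply/max_idPr.
exact: le_trans (c_ge0 n) (unclipped_ge_cost k_ge1 c_le_b).
Qed.

End BidAdjustment.

Theorem lemma4p3 (R : realFieldType) (Nb N : nat)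
  (E : {set 'I_Nb * 'I_Nb}) (zbar : 'I_Nb * 'I_Nb -> R)
  (loc : 'I_N -> 'I_Nb) (y : 'I_Nb -> R) (a c : 'I_N -> R)
  (xs : 'I_N -> R) (zs : 'I_Nb * 'I_Nb -> R)
  (b : nat -> 'I_N -> R) (beta : nat -> R) (q : nat -> 'I_N -> R)
  (xopt : nat -> 'I_N -> R) (zopt : nat -> 'I_Nb * 'I_Nb -> R) :
  (forall e, e \in E -> 0 < zbar e) ->
  (forall i, 0 <= y i) ->
  (forall n, 0 < a n) ->
  (forall n, 0 <= c n) ->
  dcopf_opt E zbar loc y a c xs zs ->
  (forall x z, dcopf_opt E zbar loc y a c x z -> x = xs) ->
  (forall i : 'I_Nb, #|[set n | loc n == i]| != 1%N) ->
  (forall n, 0 < xs n) ->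
  (forall k, (1 <= k)%N -> forall n, 0 < beta k < 2 * a n) ->
  (forall n, c n <= b 1%N n) ->
  (forall k, (1 <= k)%N -> forall n,
      is_argmax_profit (gcost a c n) (b k n) (q k n)) ->
  (forall k, (1 <= k)%N -> sdcopf_opt E zbar loc y (b k) (xopt k) (zopt k)) ->
  (forall k, (1 <= k)%N -> forall n,
      b k.+1 n = pos_part (b k n + beta k * (xopt k n - q k n))) ->
  let bs := fun n => 2 * a n * xs n + c n in
  let amax := \big[Num.max/0]_n a n in
  forall k, (1 <= k)%N ->
    \sum_n (b k.+1 n - b k n) * (bs n - b k n)
      >= beta k / (2 * amax) * \sum_n (b k n - bs n) ^+ 2.
Proof.
(* The network, uniqueness and x* > 0 hypotheses only make b* the unique efficient
   equilibrium; the inequality itself holds without them. *)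
move=> _ _ a_gt0 c_ge0 xs_opt _ _ _ beta_bounds b1_ge_cost q_argmax bid_opt b_update
  bs amax k k_ge1.
have xopt_ge0 j : (1 <= j)%N -> forall n, 0 <= xopt j n.
  by move=> j_ge1 n; case: (bid_opt _ j_ge1) => [[_ [_]]].
have step := bid_adjustment_step a_gt0 c_ge0 beta_bounds b1_ge_cost q_argmax
  xopt_ge0 b_update _ k_ge1.
have gap := sdcopf_opt_bid_gap a_gt0 xs_opt (bid_opt _ k_ge1).
have [n0 _ | no_gen] := pickP (@predT 'I_N); last first.
  by rewrite !big1 ?mulr0 // => n; have := no_gen n.
have beta_gt0 : 0 < beta k by case/andP: (beta_bounds _ k_ge1 n0).
have -> : \sum_n (b k.+1 n - b k n) * (bs n - b k n) = beta k *
    (\sum_n (xopt k n - xs n) * (bs n - b k n) + \sum_n (bs n - b k n) ^+ 2 / (2 * a n)).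
  rewrite -big_split mulr_sumr; apply: eq_bigr => n _ /=.
  by rewrite step /bs; field; rewrite gt_eqF.
rewrite -mulrA; apply: ler_wpM2l; first exact: ltW.
rewrite mulr_sumr -[X in X <= _]add0r; apply: lerD => //; apply: ler_sum => n _.
rewrite -sqrrN opprB mulrC; apply: ler_wpM2l; first exact: sqr_ge0.
have a_le_amax : a n <= amax by exact: le_bigmax.
by rewrite lef_pV2 ?posrE ?ler_wpM2l ?mulr_gt0 // (lt_le_trans (a_gt0 n)).
Qed.
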